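(* Let $O\in\mathbb{R}^2$, let $v$ be a uniform random point in $[0,1]^2$, and let $D$ be the diameter of $[0,1]^2\cup\{O\}$. Then $D\le 5\,\mathbb{E}(d(O,v))$.
   Context: $d$ is Euclidean distance. *)

From HB Require Import structures.
From mathcomp Require Import all_boot all_order all_algebra.
From mathcomp Require Import all_classical all_reals all_analysis.
Set Implicit Arguments. Unset Strict Implicit. Unset Printing Implicit Defensive.
Import Order.TTheory GRing.Theory Num.Theory.
Local Open Scope classical_set_scope.
Local Open Scope ring_scope.

Definition edist {R : realType} (p q : R * R) : R :=
  Num.sqrt ((p.1 - q.1) ^+ 2 + (p.2 - q.2) ^+ 2).

Definition unit_square {R : realType} : set (R * R) :=
  `[0%R, 1%R] `*` `[0%R, 1%R].

Definition diam {R : realType} (A : set (R * R)) : R :=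
  sup [set edist pq.1 pq.2 | pq in A `*` A].

(* uniform distribution on [0,1]^2: 2-dimensional Lebesgue measure
   (product of Lebesgue measures), which has total mass 1 on the square;
   E(d(O,v)) for v uniform in [0,1]^2 *)
Definition expected_dist_unif_square {R : realType} (O : R * R) : \bar R :=
  (\int[(@lebesgue_measure R \x @lebesgue_measure R)%E]_(v in unit_square)
     (edist O v)%:E)%E.

From Pilot Require Import Defs.
From HB Require Import structures.
From mathcomp Require Import all_boot all_order all_algebra.
From mathcomp Require Import all_classical all_reals all_analysis.
From mathcomp Require Import lra ring measurable_realfun.
Import Order.TTheory GRing.Theory Num.Theory.
Local Open Scope classical_set_scope.
Local Open Scope ring_scope.

(* Let L(a) be the lower Darboux sum of x |-> |a - x| over [0,1] on the grid
   of mesh 1/16.  Cutting the square into the 256 grid cells, on each of which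
   d >= (7/10) l1, gives E d(O,v) >= (7/10) (L(O.1) + L(O.2)).  Conversely, two
   points of the square are at distance at most 3/2, and
   d(O,v) <= |O.1 - 1/2| + |O.2 - 1/2| + 1 for v in the square; since L is
   piecewise linear with explicit slopes, one checks that 3/4 and
   |a - 1/2| + 1/2 are both at most (7/2) L(a), so the diameter is at most
   5 (7/10) (L(O.1) + L(O.2)). *)

Section integral_lower_bound.
Context d (T : measurableType d) (R : realType) (mu : measure T R).
Local Open Scope ereal_scope.

Lemma ge0_integral_ge_sum_cells (I : eqType) (s : seq I) (C : I -> set T)
    (c : I -> \bar R) (A : set T) (f : T -> \bar R) :
  measurable A -> measurable_fun A f -> (forall x, A x -> 0 <= f x) ->
  (forall k, measurable (C k)) -> uniq s -> trivIset [set` s] C ->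
  (forall k, k \in s -> C k `<=` A) ->
  (forall k, 0 <= c k) -> (forall k x, C k x -> c k <= f x) ->
  \sum_(k <- s) c k * mu (C k) <= \int[mu]_(x in A) f x.
Proof.
move=> mA mf f0 mC s_uniq Ctriv CA c0 cf.
pose U := \big[setU/set0]_(k <- s) C k.
have UA : U `<=` A.
  rewrite /U big_seq; elim/big_ind: _ => // [X Y XA YA x [/XA|/YA] //].
have mU : measurable U by apply: bigsetU_measurable => k _.
apply: le_trans (ge0_subset_integral mu mU mA mf f0 UA).
rewrite ge0_integral_bigsetU //; last 2 first.
- exact: measurable_funS mA UA mf.
- by move=> x /UA /f0.
rewrite !big_seq; apply: lee_sum => k ks; rewrite -integral_cst //.
apply: ge0_le_integral => //; last exact: cf.
- by move=> x _; exact: c0.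
- exact: measurable_funS mA (CA k ks) mf.
Qed.

End integral_lower_bound.

Section unit_grid.
Context {R : realType} (n : nat).
Hypothesis n_gt0 : (0 < n)%N.

Definition grid_itv (i : nat) : interval R := `[i%:R / n%:R, i.+1%:R / n%:R[.

Definition grid_cell (p : nat * nat) : set (R * R) :=
  [set` grid_itv p.1] `*` [set` grid_itv p.2].

Definition grid_index : seq (nat * nat) :=
  [seq (i, j) | i <- index_iota 0 n, j <- index_iota 0 n].

Lemma grid_index_uniq : uniq grid_index.
Proof. by apply: allpairs_uniq; rewrite ?iota_uniq // => -[? ?] [? ?] _ _. Qed.

Lemma measurable_grid_cell p : measurable (grid_cell p).
Proof. by apply: measurableX; exact: measurable_itv. Qed.

Lemma grid_itv_lt i : i%:R / n%:R < i.+1%:R / n%:R :> R.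
Proof. by rewrite ltr_pM2r ?invr_gt0 ?ltr0n // ltr_nat. Qed.

Lemma grid_cell_measure p :
  (@lebesgue_measure R \x @lebesgue_measure R)%E (grid_cell p) =
  (n%:R ^-2)%:E.
Proof.
rewrite product_measure1E; try exact: measurable_itv.
have itvE i : lebesgue_measure [set` grid_itv i] = (n%:R^-1)%:E.
  rewrite lebesgue_measure_itv /= lte_fin grid_itv_lt -EFinD.
  by rewrite -mulrBl -natrB // subSnn mul1r.
by rewrite [X in (X * _)%E]itvE [X in (_ * X)%E]itvE -EFinM -expr2 exprVn.
Qed.

Lemma grid_itvW {i : nat} {x : R} :
  x \in grid_itv i -> i%:R / n%:R <= x <= i.+1%:R / n%:R.
Proof. by rewrite in_itv /= => /andP[-> /ltW ->]. Qed.

Lemma grid_itv_in01 {i : nat} {x : R} :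
  x \in grid_itv i -> (i < n)%N -> 0 <= x <= 1.
Proof.
move=> /grid_itvW /andP[ix xi] ltin; apply/andP; split.
  by apply: le_trans ix; rewrite divr_ge0.
apply: (le_trans xi).
by rewrite ler_pdivrMr ?ltr0n // mul1r ler_nat.
Qed.

Lemma grid_cell_sub p : p \in grid_index -> grid_cell p `<=` unit_square.
Proof.
case/allpairsP => -[i j] [/=]; rewrite !mem_index_iota => ilt jlt ->.
move=> [x y] [/= xi yj]; split; rewrite /= in_itv /=.
- exact: grid_itv_in01 xi ilt.
- exact: grid_itv_in01 yj jlt.
Qed.

Lemma grid_itv_inj {i j : nat} {x : R} :
  x \in grid_itv i -> x \in grid_itv j -> i = j.
Proof.
have le_ij k l : k%:R / n%:R <= x -> x < l.+1%:R / n%:R -> (k <= l)%N.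
  move=> kx xl; have := le_lt_trans kx xl.
  by rewrite ltr_pM2r ?invr_gt0 ?ltr0n // ltr_nat ltnS.
rewrite !in_itv /= => /andP[ix xi] /andP[jx xj].
by apply/eqP; rewrite eqn_leq (le_ij _ _ ix xj) (le_ij _ _ jx xi).
Qed.

Lemma grid_cells_trivIset : trivIset [set` grid_index] grid_cell.
Proof.
move=> [i j] [i' j'] _ _ [[x y] [[/= xi yj] [/= xi' yj']]].
by rewrite (grid_itv_inj xi xi') (grid_itv_inj yj yj').
Qed.

Lemma sum_grid_index (f g : nat -> R) :
  \sum_(p <- grid_index) (f p.1 + g p.2) =
  n%:R * (\sum_(0 <= i < n) f i + \sum_(0 <= j < n) g j).
Proof.
rewrite big_allpairs.
change (\sum_(0 <= i < n) \sum_(0 <= j < n) (f i + g j) =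
  n%:R * (\sum_(0 <= i < n) f i + \sum_(0 <= j < n) g j)).
under eq_bigr => i _ do rewrite big_split sumr_const_nat subn0.
rewrite big_split sumr_const_nat subn0 -sumrMnl.
by rewrite mulrDr !mulr_natl -!sumrMnl.
Qed.

End unit_grid.

Section lower_sum.
Context {R : realType}.

Definition dist_to_itv (l r a : R) : R := Num.max 0 (Num.max (a - r) (l - a)).

Lemma dist_to_itv_ge0 (l r a : R) : 0 <= dist_to_itv l r a.
Proof. by rewrite le_max lexx. Qed.

Lemma dist_to_itv_ge (l r a : R) :
  a - r <= dist_to_itv l r a /\ l - a <= dist_to_itv l r a.
Proof. by rewrite !le_max !lexx !orbT. Qed.

Lemma dist_to_itv_le_dist {l r x : R} (a : R) :
  l <= x <= r -> dist_to_itv l r a <= `|a - x|.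
Proof.
move=> /andP[lx xr]; rewrite !ge_max normr_ge0 /=; apply/andP; split.
- by rewrite (le_trans _ (ler_norm _)) // lerD2l lerN2.
- by rewrite distrC (le_trans _ (ler_norm _)) // lerD2r.
Qed.

Definition lower_sum_dist (n : nat) (a : R) : R :=
  \sum_(0 <= i < n) dist_to_itv (i%:R / n%:R) (i.+1%:R / n%:R) a / n%:R.

Lemma lower_sum_dist16_bounds (a : R) :
  3/4 <= 7/2 * lower_sum_dist 16 a /\
  `|a - 1/2| + 1/2 <= 7/2 * lower_sum_dist 16 a.
Proof.
rewrite /lower_sum_dist /index_iota /= !big_cons big_nil.
(* forget each summand except for its three lower bounds *)
repeat match goal with |- context [dist_to_itv ?l ?r a] =>
  have := dist_to_itv_ge0 l r a; have [] := dist_to_itv_ge l r a;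
  generalize (dist_to_itv l r a) => ? ? ? ?
end.
split; first lra.
by case: (lerP 0 (a - 1/2)) => h; [rewrite ger0_norm | rewrite ltr0_norm];
  rewrite //; lra.
Qed.

End lower_sum.

Section euclidean_distance.
Context {R : realType}.
Implicit Types (p q v O : R * R) (c : R).

Lemma edistC p q : Defs.edist p q = Defs.edist q p.
Proof.
by rewrite /Defs.edist -(sqrrN (p.1 - q.1)) -(sqrrN (p.2 - q.2)) !opprB.
Qed.

Lemma edistxx p : Defs.edist p p = 0.
Proof. by rewrite /Defs.edist !subrr expr0n addr0 sqrtr0. Qed.

Lemma edist_le c p q :
  0 <= c -> (p.1 - q.1) ^+ 2 + (p.2 - q.2) ^+ 2 <= c ^+ 2 ->
  Defs.edist p q <= c.
Proof.
move=> c0 h; rewrite /Defs.edist -(ger0_norm c0) -sqrtr_sqr ler_sqrt //.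
by rewrite sqr_ge0.
Qed.

Lemma edist_le_l1 p q : Defs.edist p q <= `|p.1 - q.1| + `|p.2 - q.2|.
Proof.
apply: edist_le; first by rewrite addr_ge0.
rewrite -(real_normK (num_real (p.1 - q.1))).
rewrite -(real_normK (num_real (p.2 - q.2))).
have := normr_ge0 (p.1 - q.1); have := normr_ge0 (p.2 - q.2); nra.
Qed.

Lemma l1_le_edist p q : 7/10 * (`|p.1 - q.1| + `|p.2 - q.2|) <= Defs.edist p q.
Proof.
have := normr_ge0 (p.1 - q.1); have := normr_ge0 (p.2 - q.2).
set x := `|p.1 - q.1|; set y := `|p.2 - q.2| => y0 x0.
rewrite /Defs.edist -(real_normK (num_real (p.1 - q.1))).
rewrite -(real_normK (num_real (p.2 - q.2))) -/x -/y.
rewrite -[X in X <= _]ger0_norm; last by rewrite mulr_ge0 ?addr_ge0.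
rewrite -sqrtr_sqr ler_sqrt; last by rewrite addr_ge0 ?sqr_ge0.
have := sqr_ge0 (x - y); nra.
Qed.

Lemma measurable_edist O : measurable_fun setT (Defs.edist O).
Proof.
apply: measurableT_comp.
  exact: continuous_measurable_fun (@sqrt_continuous R).
by apply: measurable_funD; apply: measurable_funX; apply: measurable_funB.
Qed.

Lemma measurable_unit_square : measurable (@unit_square R).
Proof. by apply: measurableX; exact: measurable_itv. Qed.

Lemma unit_squareP v : unit_square v -> 0 <= v.1 <= 1 /\ 0 <= v.2 <= 1.
Proof. by case: v => x y [] /=; rewrite !in_itv. Qed.

Lemma edist_unit_square p q :
  unit_square p -> unit_square q -> Defs.edist p q <= 3/2.
Proof.
move=> /unit_squareP[/andP[? ?] /andP[? ?]].
move=> /unit_squareP[/andP[? ?] /andP[? ?]].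
apply: edist_le; [lra | nra].
Qed.

Lemma edist_unit_square_le O v :
  unit_square v -> Defs.edist O v <= `|O.1 - 1/2| + `|O.2 - 1/2| + 1.
Proof.
have dist_mid (a x : R) : 0 <= x <= 1 -> `|a - x| <= `|a - 1/2| + 1/2.
  move=> /andP[x0 x1]; apply: le_trans (ler_distD (1/2) a x) _.
  by rewrite lerD2l ler_norml; apply/andP; split; lra.
move=> /unit_squareP[/(dist_mid O.1) h1 /(dist_mid O.2) h2].
by apply: le_trans (edist_le_l1 O v) _; lra.
Qed.

End euclidean_distance.

Section bounds.
Context {R : realType}.
Implicit Type O : R * R.

Lemma diam_le_lower_sum O :
  diam (unit_square `|` [set O]) <=
  7/2 * (lower_sum_dist 16 O.1 + lower_sum_dist 16 O.2).
Proof.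
have [c1 h1] := lower_sum_dist16_bounds O.1.
have [c2 h2] := lower_sum_dist16_bounds O.2.
apply: ge_sup; first by exists (Defs.edist O O), (O, O) => //; split; right.
move=> _ [[p q] [/= Sp Sq] <-] /=.
case: Sp => [Sp|->]; case: Sq => [Sq|->].
- by apply: le_trans (edist_unit_square p q Sp Sq) _; lra.
- by rewrite edistC; apply: le_trans (edist_unit_square_le O p Sp) _; lra.
- by apply: le_trans (edist_unit_square_le O q Sq) _; lra.
- by rewrite edistxx; lra.
Qed.

Lemma expected_dist_ge_lower_sum (n : nat) O : (0 < n)%N ->
  ((7/10 * (lower_sum_dist n O.1 + lower_sum_dist n O.2))%:E <=
   expected_dist_unif_square O)%E.
Proof.
move=> n_gt0.
pose m i (a : R) := dist_to_itv (i%:R / n%:R) (i.+1%:R / n%:R) a.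
pose c p := 7/10 * (m p.1 O.1 + m p.2 O.2).
have c_le p v : grid_cell n p v -> c p <= Defs.edist O v.
  case: v => x y [/= xi yj]; apply: le_trans (l1_le_edist O (x, y)).
  have := dist_to_itv_le_dist O.1 (grid_itvW _ xi).
  have := dist_to_itv_le_dist O.2 (grid_itvW _ yj).
  rewrite /c /m /=; lra.
have c_ge0 p : 0 <= c p by rewrite mulr_ge0 ?addr_ge0 ?dist_to_itv_ge0.
have -> : 7/10 * (lower_sum_dist n O.1 + lower_sum_dist n O.2) =
    \sum_(p <- grid_index n) c p * n%:R ^-2.
  rewrite -mulr_suml /c -mulr_sumr.
  rewrite (sum_grid_index n (m ^~ O.1) (m ^~ O.2)) /lower_sum_dist -!mulr_suml.
  by field; rewrite pnatr_eq0 -lt0n.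
rewrite -sumEFin.
under eq_bigr => p _ do rewrite EFinM -(grid_cell_measure _ n_gt0 p).
apply: ge0_integral_ge_sum_cells.
- exact: measurable_unit_square.
- apply/measurable_funTS/measurableT_comp => //.
  exact: measurable_edist.
- by move=> v _; rewrite lee_fin sqrtr_ge0.
- exact: measurable_grid_cell.
- exact: grid_index_uniq.
- exact: grid_cells_trivIset.
- exact: grid_cell_sub.
- by move=> p; rewrite lee_fin.
- by move=> p v /c_le; rewrite lee_fin.
Qed.

End bounds.

Theorem lemma18 (R : realType) (O : R * R) :
  ((diam (unit_square `|` [set O]))%:E <= 5%:E * expected_dist_unif_square O)%E.
Proof.
apply: le_trans (lee_wpmul2l (lee_tofin (ler0n R 5))
  (expected_dist_ge_lower_sum 16 O isT)).
by rewrite -EFinM lee_fin; have := diam_le_lower_sum O; lra.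
Qed.
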